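(* Let $0<R_{\min}<R_{\max}$, $0<\varepsilon<1$, fix a center $c$, and define $r_i=R_{\min}(1+\frac{e\varepsilon}{4})^i$ for $i=0,1,\dots,s$, where $s$ is the least integer with $r_s\ge R_{\max}$. Then $s\le\lceil\frac{8}{e\varepsilon}\log\frac{R_{\max}}{R_{\min}}\rceil$, and for every $r\in[R_{\min},R_{\max}]$ there is an index $i$ with $|\Phi(K_{c,r_i})-\Phi(K_{c,r})|\le\varepsilon$; in particular $s=O(\frac1\varepsilon\log\frac{R_{\max}}{R_{\min}})$ bandwidths suffice.
   Context: $B\subset\mathbb{R}^d$ finite nonempty, $m:B\to\{0,1\}$, $M=\{x\in B:m(x)=1\}$. $K_{c,r}(x)=\exp(-\|x-c\|^2/r^2)$. For $p,q\in[0,1]$ and $K:B\to[0,1]$: $g(x)=pK(x)+q(1-K(x))$, $\ell(p,q,K)=\frac{1}{|B|}\big(\sum_{x\in M}\log g(x)+\sum_{x\in B\setminus M}\log(1-g(x))\big)$, $\ell_0(q)=\frac1{|B|}(|M|\log q+|B\setminus M|\log(1-q))$, $\Phi(K)=\max_{p,q\in[0,1]}\ell(p,q,K)-\max_q\ell_0(q)$. Standing assumption: for each bandwidth the maximizer $(p^*,q^* )$ is interior to $(0,1)^2$ with finite value. *)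

From Stdlib Require Import Reals Lra List ClassicalEpsilon.
Import ListNotations.
Open Scope R_scope.

(* Points of R^d are lists of reals of length d. *)
Definition point := list R.

Fixpoint sqdist (x c : point) : R :=
  match x, c with
  | a :: x', b :: c' => (a - b)^2 + sqdist x' c'
  | _, _ => 0
  end.

Definition Kgauss (c : point) (r : R) (x : point) : R :=
  exp (- sqdist x c / r ^ 2).

Definition gmix (p q k : R) : R := p * k + q * (1 - k).

Definition sumR (B : list point) (f : point -> R) : R :=
  fold_right (fun x acc => f x + acc) 0 B.

Definition ell (B : list point) (m : point -> bool) (K : point -> R) (p q : R) : R :=
  / INR (length B) *
  sumR B (fun x => if m x then ln (gmix p q (K x)) else ln (1 - gmix p q (K x))).

Definition ell0 (B : list point) (m : point -> bool) (q : R) : R :=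
  / INR (length B) *
  (INR (length (filter m B)) * ln q
   + INR (length (filter (fun x => negb (m x)) B)) * ln (1 - q)).

(* supremum of a set of reals (classically chosen; 0 if no lub exists) *)
Definition Rsup (E : R -> Prop) : R :=
  match excluded_middle_informative (exists l, is_lub E l) with
  | left H => proj1_sig (constructive_indefinite_description _ H)
  | right _ => 0
  end.

(* Phi(K) = max_{p,q} ell(p,q,K) - max_q ell_0(q).  The maxima are taken as
   suprema over the open parameter sets, where all logarithms are finite. *)
Definition Phi (B : list point) (m : point -> bool) (K : point -> R) : R :=
  Rsup (fun v => exists p q, 0 < p < 1 /\ 0 < q < 1 /\ v = ell B m K p q)
  - Rsup (fun v => exists q, 0 < q < 1 /\ v = ell0 B m q).

(* ceiling via Stdlib's Int_part (= floor) *)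
Definition Rceil (x : R) : Z := (- Int_part (- x))%Z.

Definition rgrid (Rmin eps : R) (i : nat) : R := Rmin * (1 + exp 1 * eps / 4) ^ i.

From Stdlib Require Import Reals List.
From Stdlib Require Import Lra Lia Psatz ClassicalEpsilon.
Open Scope R_scope.

(* For radii r1 <= r2 with r2^2 <= (1 + a) r1^2 the Gaussian
   kernels differ pointwise by at most a/e, because
   exp(-t) - exp(-g t) <= (g - 1) t exp(-t) <= (g - 1)/e.  With a = e eps/4
   the kernels are eps/4-close.  Two kernels that are eps/4-close have
   log-likelihoods that are comparable after shrinking the mixture weights
   towards 1/2: ell(K1,p,q) + ln(1 - eps/2) <= ell(K2,p',q'), and
   ln(1 - eps/2) >= -eps.  Since the maxima over (p,q) are attained, the
   suprema in Phi differ by at most eps (the null-model term cancels).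
   Finally any r in [Rmin,Rmax] lies between two consecutive grid radii
   r_i <= r <= (1+a) r_i, and is "square-close" to r_i or to r_(i+1); the
   grid length bound follows from ln(1+a) >= a/2.
   The file proves, in order: elementary exp/ln inequalities, the kernel
   gap, the likelihood comparison, the Phi comparison, the grid facts, and
   finally the theorem. *)

Lemma Rabs_le_bounds (x b : R) : Rabs x <= b -> - b <= x <= b.
Proof.
  intros H. pose proof (Rle_abs x). pose proof (Rle_abs (- x)).
  rewrite Rabs_Ropp in *. lra.
Qed.

Lemma exp_le_compat (x y : R) : x <= y -> exp x <= exp y.
Proof.
  intros [Hlt | ->]; [left; apply exp_increasing; exact Hlt | lra].
Qed.

Lemma ln_le_compat (x y : R) : 0 < x -> x <= y -> ln x <= ln y.
Proof.
  intros Hx [Hlt | ->]; [left; apply ln_increasing; assumption | lra].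
Qed.

Lemma xexp_le (t : R) : t * exp (- t) <= exp (- 1).
Proof.
  assert (Ht : t <= exp (t - 1)) by (pose proof (exp_ineq1_le (t - 1)); lra).
  replace (exp (- 1)) with (exp (t - 1) * exp (- t))
    by (rewrite <- exp_plus; f_equal; ring).
  apply Rmult_le_compat_r; [left; apply exp_pos | exact Ht].
Qed.

Lemma exp_gap (t g : R) : 0 <= t -> 1 <= g ->
  0 <= exp (- t) - exp (- (g * t)) <= (g - 1) * exp (- 1).
Proof.
  intros Ht Hg.
  set (u := (g - 1) * t).
  assert (Hu : 0 <= u) by (apply Rmult_le_pos; lra).
  assert (Hsplit : exp (- (g * t)) = exp (- t) * exp (- u))
    by (rewrite <- exp_plus; f_equal; unfold u; ring).
  assert (Hle1 : exp (- u) <= 1) by (rewrite <- exp_0; apply exp_le_compat; lra).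
  assert (Hlin : 1 - exp (- u) <= u) by (pose proof (exp_ineq1_le (- u)); lra).
  assert (Hmax := xexp_le t).
  pose proof (exp_pos (- t)).
  rewrite Hsplit. unfold u in *. nra.
Qed.

Lemma ln_one_minus_half_ge (e : R) : 0 < e < 1 -> - e <= ln (1 - e / 2).
Proof.
  intros He.
  assert (Hexp : exp (- e) <= 1 - e / 2).
  { rewrite exp_Ropp. pose proof (exp_pos e). pose proof (exp_ineq1_le e).
    apply Rmult_le_reg_l with (exp e); [assumption|].
    rewrite Rinv_r by lra. nra. }
  rewrite <- (ln_exp (- e)). apply ln_le_compat; [apply exp_pos | exact Hexp].
Qed.

Lemma ln_one_plus_ge (a : R) : 0 <= a <= 1 -> a / 2 <= ln (1 + a).
Proof.
  intros Ha. rewrite <- (ln_exp (a / 2)).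
  apply ln_le_compat; [apply exp_pos|].
  assert (Hinv : exp (a / 2) * exp (- (a / 2)) = 1)
    by (rewrite <- exp_plus, Rplus_opp_r; apply exp_0).
  pose proof (exp_ineq1_le (- (a / 2))). pose proof (exp_pos (a / 2)).
  nra.
Qed.

Lemma sqdist_nonneg (x c : point) : 0 <= sqdist x c.
Proof.
  revert c; induction x as [|a x IH]; intros [|b c]; simpl; try lra.
  pose proof (IH c). pose proof (pow2_ge_0 (a - b)). lra.
Qed.

Lemma Kgauss_in_unit (c : point) (r : R) (x : point) :
  0 < r -> 0 <= Kgauss c r x <= 1.
Proof.
  intros Hr. unfold Kgauss. split; [left; apply exp_pos|].
  rewrite <- exp_0. apply exp_le_compat.
  assert (0 <= sqdist x c / r ^ 2)
    by (apply Rmult_le_pos;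
        [apply sqdist_nonneg | left; apply Rinv_0_lt_compat, pow_lt; exact Hr]).
  unfold Rdiv in *. lra.
Qed.

Lemma Kgauss_gap (c : point) (r1 r2 a : R) (x : point) :
  0 < r1 -> r1 <= r2 -> r2 ^ 2 <= (1 + a) * r1 ^ 2 ->
  Rabs (Kgauss c r1 x - Kgauss c r2 x) <= a * exp (- 1).
Proof.
  intros Hr1 Hr12 Hsq. unfold Kgauss.
  assert (Hp1 : 0 < r1 ^ 2) by (apply pow_lt; lra).
  assert (Hp2 : 0 < r2 ^ 2) by (apply pow_lt; lra).
  set (t := sqdist x c / r2 ^ 2). set (g := r2 ^ 2 / r1 ^ 2).
  assert (Ht : 0 <= t)
    by (apply Rmult_le_pos; [apply sqdist_nonneg | left; apply Rinv_0_lt_compat; lra]).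
  assert (Hg : 1 <= g <= 1 + a).
  { assert (Eg : g * r1 ^ 2 = r2 ^ 2) by (unfold g; field; lra).
    assert (r1 ^ 2 <= r2 ^ 2) by (apply pow_incr; lra).
    split; nra. }
  replace (- sqdist x c / r2 ^ 2) with (- t) by (unfold t, Rdiv; ring).
  replace (- sqdist x c / r1 ^ 2) with (- (g * t)) by (unfold g, t; field; lra).
  destruct (exp_gap t g Ht (proj1 Hg)) as [Hlo Hhi].
  rewrite Rabs_minus_sym, Rabs_pos_eq by exact Hlo.
  pose proof (exp_pos (- 1)). nra.
Qed.

Lemma gmix_in_unit (p q k : R) : 0 < p < 1 -> 0 < q < 1 -> 0 <= k <= 1 ->
  0 < gmix p q k < 1.
Proof.
  intros Hp Hq Hk. unfold gmix.
  destruct (Rle_dec p q); split; nra.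
Qed.

(* Shrinking the weights towards 1/2 by a factor (1 - th) absorbs a kernel
   perturbation of size th/2, both for g and for 1 - g. *)
Lemma gmix_shrink (p q k1 k2 th : R) :
  0 < p < 1 -> 0 < q < 1 -> 0 < th < 1 -> Rabs (k1 - k2) <= th / 2 ->
  let g' := gmix ((1 - th) * p + th / 2) ((1 - th) * q + th / 2) k2 in
  (1 - th) * gmix p q k1 <= g' /\ (1 - th) * (1 - gmix p q k1) <= 1 - g'.
Proof.
  intros Hp Hq Hth Hk g'.
  assert (Hprod : Rabs ((p - q) * (k2 - k1)) <= th / 2).
  { rewrite Rabs_mult, Rabs_minus_sym with k2 k1.
    assert (Rabs (p - q) <= 1) by (apply Rabs_le; lra).
    pose proof (Rabs_pos (k1 - k2)). nra. }
  apply Rabs_le_bounds in Hprod.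
  assert (Hg' : g' = (1 - th) * (gmix p q k1 + (p - q) * (k2 - k1)) + th / 2)
    by (unfold g', gmix; ring).
  rewrite Hg'. split; nra.
Qed.

Lemma sumR_shift (l : list point) (f1 f2 : point -> R) (a : R) :
  (forall x, In x l -> f1 x + a <= f2 x) ->
  sumR l f1 + INR (length l) * a <= sumR l f2.
Proof.
  induction l as [|y l IH]; intros H; [simpl; lra|].
  assert (Hy := H y (or_introl eq_refl)).
  assert (Hl := IH (fun x Hx => H x (or_intror Hx))).
  change (f1 y + sumR l f1 + INR (S (length l)) * a <= f2 y + sumR l f2).
  rewrite S_INR. lra.
Qed.

Lemma ell_shift (B : list point) (m : point -> bool) (K1 K2 : point -> R)
    (p q th : R) :
  B <> nil -> 0 < p < 1 -> 0 < q < 1 -> 0 < th < 1 ->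
  (forall x, In x B -> 0 <= K1 x <= 1) ->
  (forall x, In x B -> Rabs (K1 x - K2 x) <= th / 2) ->
  ell B m K1 p q + ln (1 - th)
    <= ell B m K2 ((1 - th) * p + th / 2) ((1 - th) * q + th / 2).
Proof.
  intros HB Hp Hq Hth HK1 HK12. unfold ell.
  assert (HN : 0 < INR (length B))
    by (destruct B; [congruence | apply lt_0_INR; simpl; lia]).
  match goal with |- / _ * sumR B ?f1 + _ <= / _ * sumR B ?f2 =>
    assert (Hsum : sumR B f1 + INR (length B) * ln (1 - th) <= sumR B f2) end.
  { apply sumR_shift. intros x Hx.
    pose proof (gmix_in_unit p q (K1 x) Hp Hq (HK1 x Hx)).
    destruct (gmix_shrink p q (K1 x) (K2 x) th Hp Hq Hth (HK12 x Hx)) as [H1 H2].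
    destruct (m x); rewrite <- ln_mult by lra;
      (apply ln_le_compat; [apply Rmult_lt_0_compat; lra | lra]). }
  apply Rmult_le_compat_l with (r := / INR (length B)) in Hsum;
    [| left; apply Rinv_0_lt_compat; exact HN].
  replace (/ INR (length B) * (_ + INR (length B) * ln (1 - th)))
    with (/ INR (length B) * sumR B (fun x => if m x then ln (gmix p q (K1 x))
                                        else ln (1 - gmix p q (K1 x))) + ln (1 - th))
    in Hsum by (field; lra).
  exact Hsum.
Qed.

Lemma Rsup_max (E : R -> Prop) (v : R) :
  E v -> (forall w, E w -> w <= v) -> Rsup E = v.
Proof.
  intros Hv Hub.
  assert (Hlub : is_lub E v) by (split; [exact Hub | intros b Hb; apply Hb, Hv]).
  unfold Rsup. destruct (excluded_middle_informative _) as [H | H].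
  - destruct (constructive_indefinite_description _ H) as [l Hl]; simpl.
    exact (is_lub_u _ _ _ Hl Hlub).
  - exfalso. apply H. exists v. exact Hlub.
Qed.

Definition ell_values (B : list point) (m : point -> bool) (K : point -> R)
    : R -> Prop :=
  fun v => exists p q, 0 < p < 1 /\ 0 < q < 1 /\ v = ell B m K p q.

Definition ell_max_attained (B : list point) (m : point -> bool) (K : point -> R)
    : Prop :=
  exists ps qs, 0 < ps < 1 /\ 0 < qs < 1 /\
    forall p q, 0 < p < 1 -> 0 < q < 1 -> ell B m K p q <= ell B m K ps qs.

Lemma sup_ell_shift (B : list point) (m : point -> bool) (K1 K2 : point -> R)
    (e : R) :
  B <> nil -> 0 < e < 1 ->
  (forall x, In x B -> 0 <= K1 x <= 1) ->
  (forall x, In x B -> Rabs (K1 x - K2 x) <= e / 4) ->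
  ell_max_attained B m K1 -> ell_max_attained B m K2 ->
  Rsup (ell_values B m K1) - e <= Rsup (ell_values B m K2).
Proof.
  intros HB He HK1 HK12 (p1 & q1 & Hp1 & Hq1 & Hmax1) (p2 & q2 & Hp2 & Hq2 & Hmax2).
  rewrite (Rsup_max _ (ell B m K1 p1 q1)), (Rsup_max _ (ell B m K2 p2 q2));
    [| exists p2, q2; auto | intros w (p & q & Hp & Hq & ->); auto
     | exists p1, q1; auto | intros w (p & q & Hp & Hq & ->); auto].
  assert (Hshift := ell_shift B m K1 K2 p1 q1 (e / 2) HB Hp1 Hq1 ltac:(lra) HK1
    ltac:(intros x Hx; specialize (HK12 x Hx); lra)).
  assert (Hle := Hmax2 ((1 - e / 2) * p1 + e / 2 / 2) ((1 - e / 2) * q1 + e / 2 / 2)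
    ltac:(nra) ltac:(nra)).
  pose proof (ln_one_minus_half_ge e He). lra.
Qed.

Lemma Phi_close (B : list point) (m : point -> bool) (K1 K2 : point -> R)
    (e : R) :
  B <> nil -> 0 < e < 1 ->
  (forall x, In x B -> 0 <= K1 x <= 1) -> (forall x, In x B -> 0 <= K2 x <= 1) ->
  (forall x, In x B -> Rabs (K1 x - K2 x) <= e / 4) ->
  ell_max_attained B m K1 -> ell_max_attained B m K2 ->
  Rabs (Phi B m K1 - Phi B m K2) <= e.
Proof.
  intros HB He HK1 HK2 HK12 Hmax1 Hmax2.
  assert (HK21 : forall x, In x B -> Rabs (K2 x - K1 x) <= e / 4)
    by (intros x Hx; rewrite Rabs_minus_sym; auto).
  pose proof (sup_ell_shift B m K1 K2 e HB He HK1 HK12 Hmax1 Hmax2).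
  pose proof (sup_ell_shift B m K2 K1 e HB He HK2 HK21 Hmax2 Hmax1).
  unfold Phi. fold (ell_values B m K1) (ell_values B m K2).
  apply Rabs_le. lra.
Qed.

Definition sq_close (a r1 r2 : R) : Prop := r1 <= r2 /\ r2 ^ 2 <= (1 + a) * r1 ^ 2.

Lemma Phi_close_radii (B : list point) (m : point -> bool) (c : point)
    (eps r1 r2 : R) :
  B <> nil -> 0 < eps < 1 ->
  (forall r, 0 < r -> ell_max_attained B m (Kgauss c r)) ->
  0 < r1 -> sq_close (exp 1 * eps / 4) r1 r2 ->
  Rabs (Phi B m (Kgauss c r1) - Phi B m (Kgauss c r2)) <= eps.
Proof.
  intros HB Heps Hstand Hr1 [Hr12 Hsq].
  assert (Hr2 : 0 < r2) by lra.
  assert (Hratio : exp 1 * eps / 4 * exp (- 1) = eps / 4).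
  { replace (exp 1 * eps / 4 * exp (- 1)) with (exp 1 * exp (- 1) * (eps / 4)) by field.
    rewrite <- exp_plus, Rplus_opp_r, exp_0. ring. }
  apply Phi_close; auto; intros x _.
  - apply Kgauss_in_unit; exact Hr1.
  - apply Kgauss_in_unit; exact Hr2.
  - rewrite <- Hratio. apply Kgauss_gap; assumption.
Qed.

Lemma seq_bracket (u : nat -> R) (r : R) (n : nat) :
  (1 <= n)%nat -> u 0%nat <= r <= u n ->
  exists i, (i < n)%nat /\ u i <= r <= u (S i).
Proof.
  induction n as [|n IH]; intros Hn Hr; [lia|].
  destruct (Nat.eq_dec n 0) as [-> | Hn0]; [exists 0%nat; split; [lia | exact Hr]|].
  destruct (Rle_dec r (u n)) as [Hle | Hgt].
  - destruct IH as (i & Hi & Hri); [lia | lra|]. exists i; split; [lia | exact Hri].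
  - exists n; split; [lia | lra].
Qed.

Lemma sq_close_bracket (a x r : R) : 0 < a -> 0 < x -> x <= r <= (1 + a) * x ->
  sq_close a x r \/ sq_close a r ((1 + a) * x).
Proof.
  intros Ha Hx Hr. unfold sq_close.
  destruct (Rle_dec (r ^ 2) ((1 + a) * x ^ 2)) as [Hle | Hgt];
    [left; split; lra | right; split; [lra | nra]].
Qed.

Lemma grid_length (a Rmin Rmax : R) (s : nat) :
  0 < a <= 1 -> 0 < Rmin < Rmax ->
  (forall i, (i < s)%nat -> Rmin * (1 + a) ^ i < Rmax) ->
  INR s - 1 < ln (Rmax / Rmin) / (a / 2).
Proof.
  intros Ha HR Hbelow.
  assert (Eq : Rmax / Rmin * Rmin = Rmax) by (field; lra).
  assert (Hpos : 0 < ln (Rmax / Rmin))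
    by (rewrite <- ln_1; apply ln_increasing; nra).
  apply Rmult_lt_reg_r with (a / 2); [lra|].
  replace (ln (Rmax / Rmin) / (a / 2) * (a / 2)) with (ln (Rmax / Rmin)) by (field; lra).
  destruct s as [|n]; [simpl; nra|].
  assert (Hn := Hbelow n ltac:(lia)).
  assert (Hgeo : INR n * ln (1 + a) < ln (Rmax / Rmin)).
  { rewrite <- ln_pow by lra. apply ln_increasing; [apply pow_lt; lra | nra]. }
  pose proof (ln_one_plus_ge a ltac:(lra)). pose proof (pos_INR n).
  rewrite S_INR. nra.
Qed.

Lemma nat_le_Rceil (n : nat) (x : R) : INR n - 1 < x -> (Z.of_nat n <= Rceil x)%Z.
Proof.
  intros Hx.
  assert (Hceil : x <= IZR (Rceil x)).
  { unfold Rceil. rewrite opp_IZR. destruct (base_Int_part (- x)). lra. }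
  assert (Hlt : IZR (Z.of_nat n) < IZR (Rceil x + 1))
    by (rewrite plus_IZR, <- INR_IZR_INZ; lra).
  apply lt_IZR in Hlt. lia.
Qed.

Theorem mainTheorem8
  (d : nat) (B : list point) (m : point -> bool) (c : point)
  (HBne : B <> nil) (HBnd : NoDup B)
  (HBd : forall x, In x B -> length x = d) (Hcd : length c = d)
  (Hstand : forall r, 0 < r -> exists ps qs, 0 < ps < 1 /\ 0 < qs < 1 /\
       forall p q, 0 < p < 1 -> 0 < q < 1 ->
         ell B m (Kgauss c r) p q <= ell B m (Kgauss c r) ps qs)
  (Rmin Rmax eps : R) (HRmin : 0 < Rmin) (HR : Rmin < Rmax)
  (Heps : 0 < eps < 1)
  (s : nat) (Hs : Rmax <= rgrid Rmin eps s)
  (Hsmin : forall i, (i < s)%nat -> rgrid Rmin eps i < Rmax) :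
  IZR (Z.of_nat s) <= IZR (Rceil (8 / (exp 1 * eps) * ln (Rmax / Rmin))) /\
  forall r, Rmin <= r <= Rmax ->
    exists i, (i <= s)%nat /\
      Rabs (Phi B m (Kgauss c (rgrid Rmin eps i)) - Phi B m (Kgauss c r)) <= eps.
Proof.
  set (a := exp 1 * eps / 4).
  assert (Ha : 0 < a <= 1) by (pose proof exp_pos 1; pose proof exp_le_3; unfold a; nra).
  assert (Hstep : forall i, rgrid Rmin eps (S i) = (1 + a) * rgrid Rmin eps i)
    by (intros i; unfold rgrid, a; simpl; field).
  assert (Hgpos : forall i, 0 < rgrid Rmin eps i)
    by (intros i; unfold rgrid; apply Rmult_lt_0_compat; [lra | apply pow_lt; change (0 < 1 + a); lra]).
  split.
  - apply IZR_le, nat_le_Rceil.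
    replace (8 / (exp 1 * eps) * ln (Rmax / Rmin)) with (ln (Rmax / Rmin) / (a / 2))
      by (unfold a; field; pose proof exp_pos 1; lra).
    apply grid_length; auto.
  - intros r Hr.
    assert (Hs1 : (1 <= s)%nat)
      by (destruct s; [unfold rgrid in Hs; simpl in Hs; lra | lia]).
    destruct (seq_bracket (rgrid Rmin eps) r s Hs1) as (i & Hi & Hri);
      [split; [unfold rgrid; simpl; lra | lra]|].
    rewrite Hstep in Hri.
    destruct (sq_close_bracket a _ r (proj1 Ha) (Hgpos i) Hri) as [Hclose | Hclose].
    + exists i. split; [lia|]. apply Phi_close_radii; auto.
    + exists (S i). split; [lia|]. rewrite Hstep, Rabs_minus_sym.
      apply Phi_close_radii; auto. lra.
Qed.
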